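(* Let $\mathcal P$ be a compact parameter set with probability distribution $\mathbb P$, and for each $P\in\mathcal P$ let the quadratic program $J^*(P)=\min_U\{p(P;U): H(P)U\le h(P)\}$ be feasible with finite optimal value, with $p(P;U):=\tfrac12 U^\top Q(P)U+c(P)^\top U$ and dual function $d(P;\lambda)$. Let $\tilde U$ and $\tilde\lambda$ be fixed maps on $\mathcal P$ (independent of the verification samples). Given $\epsilon\in(0,1)$, $\beta\in(0,1)$, $\gamma>0$, choose $\epsilon_p,\epsilon_d>0$ with $\epsilon_p+\epsilon_d=\epsilon$, $\beta_p,\beta_d>0$ with $\beta_p+\beta_d=\beta$, $\gamma_p,\gamma_d>0$ with $\gamma_p+\gamma_d=\gamma$, and integers $N_p\ge \ln(1/\beta_p)/\ln(1/(1-\epsilon_p))$, $N_d\ge \ln(1/\beta_d)/\ln(1/(1-\epsilon_d))$. Draw independent samples $P^{(1)},\dots,P^{(N_p)}$ (primal) and $\bar P^{(1)},\dots,\bar P^{(N_d)}$ (dual), all i.i.d. according to $\mathbb P$. Then, with probability at least $1-\beta$ over these samples, the following holds: if $$H(P^{(i)})\tilde U(P^{(i)})\le h(P^{(i)}),\quad p(P^{(i)};\tilde U(P^{(i)}))\le J^*(P^{(i)})+\gamma_p\quad (i=1,\dots,N_p)$$ and $$\tilde\lambda(\bar P^{(j)})\ge0,\quad d(\bar P^{(j)};\tilde\lambda(\bar P^{(j)}))\ge J^*(\bar P^{(j)})-\gamma_d\quad (j=1,\dots,N_d),$$ then $$\mathbb P\big[\,H(P)\tilde U(P)\le h(P),\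 \tilde\lambda(P)\ge0,\ p(P;\tilde U(P))-d(P;\tilde\lambda(P))\le\gamma\,\big]\ \ge\ 1-\epsilon.$$
   Context: $Q(P)$ is symmetric positive definite, $c(P)$ a vector, $H(P),h(P)$ a matrix and vector of compatible dimensions; inequalities are componentwise. The dual function is $d(P;\lambda):=\inf_U\{p(P;U)+\lambda^\top(H(P)U-h(P))\}=-\tfrac12 (c(P)+H(P)^\top\lambda)^\top Q(P)^{-1}(c(P)+H(P)^\top\lambda)-\lambda^\top h(P)$ for $\lambda\ge0$. In the paper $\tilde U$ is a learned approximation of the MPC optimizer (primal policy) and $\tilde\lambda$ a learned approximation of the optimal dual multiplier (dual policy). *)

From Stdlib Require Import Reals ClassicalEpsilon.
Open Scope R_scope.

Fixpoint rsum (n : nat) (f : nat -> R) : R :=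
  match n with O => 0 | S k => rsum k f + f k end.
Fixpoint rprod (n : nat) (f : nat -> R) : R :=
  match n with O => 1 | S k => rprod k f * f k end.

(** Vectors in R^n are functions nat -> R (only indices < n matter);
    matrices are functions nat -> nat -> R. *)
Definition vec := nat -> R.
Definition mat := nat -> nat -> R.

Definition dot (n : nat) (u v : vec) : R := rsum n (fun i => u i * v i).
Definition mv (n : nat) (A : mat) (u : vec) : vec :=
  fun i => rsum n (fun j => A i j * u j).

Definition sym_pd (n : nat) (Q : mat) : Prop :=
  (forall i j, (i < n)%nat -> (j < n)%nat -> Q i j = Q j i) /\
  (forall x : vec, (exists i, (i < n)%nat /\ x i <> 0) -> 0 < dot n x (mv n Q x)).

Definition qp_obj (n : nat) (Q : mat) (c U : vec) : R :=
  / 2 * dot n U (mv n Q U) + dot n c U.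

Definition qp_feas (n m : nat) (H : mat) (h U : vec) : Prop :=
  forall i, (i < m)%nat -> mv n H U i <= h i.

Definition vnonneg (m : nat) (lam : vec) : Prop :=
  forall i, (i < m)%nat -> 0 <= lam i.

Definition is_glb_R (S : R -> Prop) (l : R) : Prop :=
  (forall x, S x -> l <= x) /\ (forall b, (forall x, S x -> b <= x) -> b <= l).

Definition Rinf (S : R -> Prop) : R :=
  match excluded_middle_informative (exists l, is_glb_R S l) with
  | left H => proj1_sig (constructive_indefinite_description _ H)
  | right _ => 0
  end.

Definition qp_feasible_finite (n m : nat) (Q : mat) (c : vec) (H : mat) (h : vec) : Prop :=
  (exists U, qp_feas n m H h U) /\
  (exists l, forall U, qp_feas n m H h U -> l <= qp_obj n Q c U).

Definition qp_value (n m : nat) (Q : mat) (c : vec) (H : mat) (h : vec) : R :=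
  Rinf (fun v => exists U, qp_feas n m H h U /\ v = qp_obj n Q c U).

Definition lagrangian (n m : nat) (Q : mat) (c : vec) (H : mat) (h U lam : vec) : R :=
  qp_obj n Q c U + dot m lam (fun i => mv n H U i - h i).
Definition qp_dual (n m : nat) (Q : mat) (c : vec) (H : mat) (h lam : vec) : R :=
  Rinf (fun v => exists U, v = lagrangian n m Q c H h U lam).

Definition primal_ok (n m : nat) (Q : vec -> mat) (c : vec -> vec) (H : vec -> mat)
  (h : vec -> vec) (Ut : vec -> vec) (gp : R) (P : vec) : Prop :=
  qp_feas n m (H P) (h P) (Ut P) /\
  qp_obj n (Q P) (c P) (Ut P) <= qp_value n m (Q P) (c P) (H P) (h P) + gp.

Definition dual_ok (n m : nat) (Q : vec -> mat) (c : vec -> vec) (H : vec -> mat)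
  (h : vec -> vec) (lt : vec -> vec) (gd : R) (P : vec) : Prop :=
  vnonneg m (lt P) /\
  qp_value n m (Q P) (c P) (H P) (h P) - gd <= qp_dual n m (Q P) (c P) (H P) (h P) (lt P).

Definition target_ok (n m : nat) (Q : vec -> mat) (c : vec -> vec) (H : vec -> mat)
  (h : vec -> vec) (Ut lt : vec -> vec) (g : R) (P : vec) : Prop :=
  qp_feas n m (H P) (h P) (Ut P) /\ vnonneg m (lt P) /\
  qp_obj n (Q P) (c P) (Ut P) - qp_dual n m (Q P) (c P) (H P) (h P) (lt P) <= g.

(** Sequential compactness of a subset of R^q (points are zero beyond q) *)
Definition compact_Rq (q : nat) (K : vec -> Prop) : Prop :=
  (forall P, K P -> forall i, (q <= i)%nat -> P i = 0) /\
  (forall u : nat -> vec, (forall k, K (u k)) ->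
     exists phi : nat -> nat, (forall k, (phi k < phi (S k))%nat) /\
       exists L, K L /\ forall i, Un_cv (fun k => u (phi k) i) (L i)).

Definition sigma_algebra {T : Type} (F : (T -> Prop) -> Prop) : Prop :=
  F (fun _ => True) /\
  (forall A, F A -> F (fun x => ~ A x)) /\
  (forall A : nat -> T -> Prop, (forall k, F (A k)) -> F (fun x => exists k, A k x)).

Definition prob_measure {T : Type} (F : (T -> Prop) -> Prop) (mu : (T -> Prop) -> R) : Prop :=
  mu (fun _ => True) = 1 /\
  (forall A, F A -> 0 <= mu A) /\
  (forall A : nat -> T -> Prop, (forall k, F (A k)) ->
     (forall k l x, k <> l -> A k x -> A l x -> False) ->
     infinite_sum (fun k => mu (A k)) (mu (fun x => exists k, A k x))).

Definition measurable_map {O T : Type} (FO : (O -> Prop) -> Prop) (FT : (T -> Prop) -> Prop)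
  (X : O -> T) : Prop :=
  forall A, FT A -> FO (fun w => A (X w)).

Definition iid_sample {O T : Type} (FO : (O -> Prop) -> Prop) (Pr : (O -> Prop) -> R)
  (FT : (T -> Prop) -> Prop) (mu : (T -> Prop) -> R) (X : nat -> O -> T) (N : nat) : Prop :=
  (forall k, (k < N)%nat ->
     measurable_map FO FT (X k) /\ (forall A, FT A -> Pr (fun w => A (X k w)) = mu A)) /\
  (forall A : nat -> T -> Prop, (forall k, (k < N)%nat -> FT (A k)) ->
     Pr (fun w => forall k, (k < N)%nat -> A k (X k w)) =
     rprod N (fun k => Pr (fun w => A k (X k w)))).

From Stdlib Require Import Reals Lra Lia Classical FunctionalExtensionality PropExtensionality.
Open Scope R_scope.

(** The theorem is two applications of the classical "scenario" bound,
    glued together by a union bound and by a pointwise duality-gap estimate: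
    - if a measurable set S has mu S < 1 - e, then L i.i.d. samples all land
      in S with probability mu S ^ L <= (1 - e) ^ L, which is at most b as soon
      as L >= ln(1/b) / ln(1/(1-e));  hence, outside an event of probability
      at most b, "all samples lie in S" implies mu S >= 1 - e;
    - applied to the primal-acceptance set with (eps_p, beta_p) on the first Np
      samples and to the dual-acceptance set with (eps_d, beta_d) on the next Nd
      samples, the union bound gives a good event of probability >= 1 - beta
      on which both acceptance sets have measure >= 1 - eps_{p,d};
    - at a parameter accepted by both tests, p(U) <= J* + gam_p and
      d(lam) >= J* - gam_d, so the duality gap is at most gam; hence the target
      set contains the intersection of the acceptance sets, whose measure is
      at least 1 - eps_p - eps_d = 1 - eps by the Bonferroni inequality. *)

Lemma set_ext {T : Type} (A B : T -> Prop) : (forall x, A x <-> B x) -> A = B.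
Proof.
  intros HAB; apply functional_extensionality; intros x.
  apply propositional_extensionality; auto.
Qed.

(** A constant series with a finite sum has zero terms: the difference of two
    consecutive partial sums is the common term and must tend to 0. *)
Lemma infinite_sum_const_zero (a l : R) : infinite_sum (fun _ => a) l -> a = 0.
Proof.
  intros Hsum.
  destruct (Req_dec a 0) as [Ha | Ha]; [exact Ha | exfalso].
  assert (Hpos : 0 < Rabs a / 2) by (assert (0 < Rabs a) by (apply Rabs_pos_lt; auto); lra).
  destruct (Hsum _ Hpos) as [N HN].
  assert (HN0 := HN N (le_n _)).
  assert (HN1 := HN (S N) (le_S _ _ (le_n _))).
  unfold Rdist in *; simpl sum_f_R0 in HN1.
  set (s := sum_f_R0 (fun _ => a) N) in *.
  assert (Rabs a <= Rabs (s + a - l) + Rabs (s - l)).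
  { replace a with ((s + a - l) + - (s - l)) at 1 by ring.
    rewrite <- (Rabs_Ropp (s - l)); apply Rabs_triang. }
  lra.
Qed.

Section Events.
Context {T : Type} (F : (T -> Prop) -> Prop) (mu : (T -> Prop) -> R).
Hypothesis HF : sigma_algebra F.
Hypothesis Hmu : prob_measure F mu.

Lemma sa_full : F (fun _ => True).
Proof. apply HF. Qed.

Lemma sa_compl (A : T -> Prop) : F A -> F (fun x => ~ A x).
Proof. apply HF. Qed.

Lemma sa_empty : F (fun _ => False).
Proof.
  replace (fun _ : T => False) with (fun _ : T => ~ True) by (apply set_ext; tauto).
  apply sa_compl, sa_full.
Qed.

(** The two-term sequence A, B, empty, empty, ..., used to reduce finite
    unions and finite additivity to their countable versions. *)
Definition pair_seq (A B : T -> Prop) (k : nat) : T -> Prop :=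
  match k with 0%nat => A | 1%nat => B | _ => fun _ => False end.

Lemma pair_seq_union (A B : T -> Prop) :
  (fun x => exists k, pair_seq A B k x) = (fun x => A x \/ B x).
Proof.
  apply set_ext; intros x; split.
  - intros [[|[|k]] Hk]; simpl in Hk; tauto.
  - intros [Hx | Hx]; [exists 0%nat | exists 1%nat]; exact Hx.
Qed.

Lemma sa_pair_seq (A B : T -> Prop) : F A -> F B -> forall k, F (pair_seq A B k).
Proof. intros HA HB [|[|k]]; simpl; auto using sa_empty. Qed.

Lemma sa_union (A B : T -> Prop) : F A -> F B -> F (fun x => A x \/ B x).
Proof.
  intros HA HB; rewrite <- pair_seq_union.
  apply HF, sa_pair_seq; auto.
Qed.

Lemma sa_inter (A B : T -> Prop) : F A -> F B -> F (fun x => A x /\ B x).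
Proof.
  intros HA HB.
  replace (fun x => A x /\ B x) with (fun x => ~ (~ A x \/ ~ B x))
    by (apply set_ext; intros x; tauto).
  apply sa_compl, sa_union; apply sa_compl; auto.
Qed.

Lemma sa_countable_inter (A : nat -> T -> Prop) :
  (forall k, F (A k)) -> F (fun x => forall k, A k x).
Proof.
  intros HA.
  replace (fun x => forall k, A k x) with (fun x => ~ exists k, ~ A k x).
  - apply sa_compl, HF; intros k; apply sa_compl, HA.
  - apply set_ext; intros x; split.
    + intros Hx k; apply NNPP; eauto.
    + intros Hx [k Hk]; auto.
Qed.

Lemma sa_guard (P : Prop) (A : T -> Prop) : (P -> F A) -> F (fun x => P -> A x).
Proof.
  intros HA; destruct (classic P) as [HP | HnP].
  - replace (fun x => P -> A x) with A by (apply set_ext; intros x; tauto).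
    auto.
  - replace (fun x => P -> A x) with (fun _ : T => True) by (apply set_ext; intros x; tauto).
    apply sa_full.
Qed.

Lemma mu_nonneg (A : T -> Prop) : F A -> 0 <= mu A.
Proof. apply Hmu. Qed.

Lemma mu_empty : mu (fun _ => False) = 0.
Proof.
  destruct Hmu as [_ [_ Hadd]].
  apply (infinite_sum_const_zero _ (mu (fun x => exists k : nat, False))).
  apply (Hadd (fun _ _ => False)); [intros; apply sa_empty | tauto].
Qed.

Lemma mu_disjoint_union (A B : T -> Prop) : F A -> F B ->
  (forall x, A x -> B x -> False) -> mu (fun x => A x \/ B x) = mu A + mu B.
Proof.
  intros HA HB Hdisj.
  destruct Hmu as [_ [_ Hadd]].
  assert (Hsum := Hadd (pair_seq A B) (sa_pair_seq A B HA HB)).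
  rewrite pair_seq_union in Hsum.
  symmetry; apply (uniqueness_sum (fun k => mu (pair_seq A B k))).
  - intros e He; exists 1%nat; intros N HN.
    assert (Hpartial : sum_f_R0 (fun k => mu (pair_seq A B k)) N = mu A + mu B).
    { induction N as [|[|N] IH]; [lia | simpl; ring |].
      rewrite tech5, IH by lia; simpl; rewrite mu_empty; ring. }
    rewrite Hpartial; unfold Rdist; rewrite Rminus_diag, Rabs_R0; exact He.
  - apply Hsum; intros [|[|k]] [|[|l]] x Hkl; simpl; try tauto; eauto.
Qed.

Lemma mu_compl (A : T -> Prop) : F A -> mu (fun x => ~ A x) = 1 - mu A.
Proof.
  intros HA.
  assert (E := mu_disjoint_union A (fun x => ~ A x) HA (sa_compl _ HA) (fun x a na => na a)).
  cbv beta in E.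
  replace (fun x => A x \/ ~ A x) with (fun _ : T => True) in E
    by (apply set_ext; intros x; split; [intros _; apply classic | auto]).
  destruct Hmu as [Hfull _]; lra.
Qed.

Lemma mu_mono (A B : T -> Prop) : F A -> F B -> (forall x, A x -> B x) -> mu A <= mu B.
Proof.
  intros HA HB HAB.
  assert (HBA : F (fun x => B x /\ ~ A x)) by (apply sa_inter; auto using sa_compl).
  assert (E := mu_disjoint_union A _ HA HBA (fun x a b => proj2 b a)).
  cbv beta in E.
  replace (fun x => A x \/ (B x /\ ~ A x)) with B in E.
  - assert (0 <= mu (fun x => B x /\ ~ A x)) by (apply mu_nonneg; auto). lra.
  - apply set_ext; intros x; destruct (classic (A x)); intuition.
Qed.

Lemma mu_union_le (A B : T -> Prop) : F A -> F B -> mu (fun x => A x \/ B x) <= mu A + mu B.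
Proof.
  intros HA HB.
  assert (HBA : F (fun x => B x /\ ~ A x)) by (apply sa_inter; auto using sa_compl).
  assert (E := mu_disjoint_union A _ HA HBA (fun x a b => proj2 b a)).
  cbv beta in E.
  replace (fun x => A x \/ (B x /\ ~ A x)) with (fun x => A x \/ B x) in E
    by (apply set_ext; intros x; destruct (classic (A x)); tauto).
  assert (mu (fun x => B x /\ ~ A x) <= mu B) by (apply mu_mono; auto; tauto).
  lra.
Qed.

(** Bonferroni: P(A and B) >= P(A) + P(B) - 1, the union bound for complements. *)
Lemma mu_inter_ge (A B : T -> Prop) : F A -> F B -> mu A + mu B - 1 <= mu (fun x => A x /\ B x).
Proof.
  intros HA HB.
  assert (HU := mu_union_le _ _ (sa_compl _ HA) (sa_compl _ HB)).
  assert (E := mu_compl _ (sa_union _ _ (sa_compl _ HA) (sa_compl _ HB))).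
  cbv beta in HU, E.
  replace (fun x => ~ (~ A x \/ ~ B x)) with (fun x => A x /\ B x) in E
    by (apply set_ext; intros x; destruct (classic (A x)); tauto).
  rewrite (mu_compl A HA), (mu_compl B HB) in HU.
  lra.
Qed.

End Events.

Lemma rprod_ext (N : nat) (f g : nat -> R) :
  (forall k, (k < N)%nat -> f k = g k) -> rprod N f = rprod N g.
Proof.
  induction N as [|N IH]; simpl; intros Hfg; auto.
  rewrite IH by (intros; apply Hfg; lia).
  rewrite Hfg by lia; reflexivity.
Qed.

Definition in_block (lo L k : nat) : bool := (Nat.leb lo k && Nat.ltb k (lo + L))%bool.

Lemma in_block_spec (lo L k : nat) : in_block lo L k = true <-> (lo <= k < lo + L)%nat.
Proof. unfold in_block; rewrite Bool.andb_true_iff, Nat.leb_le, Nat.ltb_lt; tauto. Qed.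

Lemma rprod_block (N lo L : nat) (a : R) : (lo + L <= N)%nat ->
  rprod N (fun k => if in_block lo L k then a else 1) = a ^ L.
Proof.
  intros HN.
  assert (Hgen : forall M, rprod M (fun k => if in_block lo L k then a else 1)
                           = a ^ (Nat.min M (lo + L) - Nat.min M lo)).
  { induction M as [|M IH]; [reflexivity |]; cbn [rprod]; rewrite IH.
    destruct (in_block lo L M) eqn:Hin.
    - apply in_block_spec in Hin.
      replace (Nat.min (S M) (lo + L) - Nat.min (S M) lo)%nat
        with (S (Nat.min M (lo + L) - Nat.min M lo)) by lia.
      simpl; ring.
    - assert (~ (lo <= M < lo + L)%nat) by (rewrite <- in_block_spec; congruence).
      replace (Nat.min (S M) (lo + L) - Nat.min (S M) lo)%nat
        with (Nat.min M (lo + L) - Nat.min M lo)%nat by lia.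
      ring. }
  rewrite Hgen; f_equal; lia.
Qed.

Lemma sample_size_bound (e b : R) (L : nat) : 0 < e < 1 -> 0 < b ->
  ln (/ b) / ln (/ (1 - e)) <= INR L -> (1 - e) ^ L <= b.
Proof.
  intros He Hb HL.
  rewrite ln_Rinv, ln_Rinv in HL by lra.
  assert (Hln : ln (1 - e) < 0) by (rewrite <- ln_1; apply ln_increasing; lra).
  assert (Hexp : INR L * ln (1 - e) <= ln b).
  { apply Rmult_le_reg_r with (/ - ln (1 - e)); [apply Rinv_0_lt_compat; lra |].
    replace (INR L * ln (1 - e) * / - ln (1 - e)) with (- INR L) by (field; lra).
    replace (ln b * / - ln (1 - e)) with (- (- ln b / - ln (1 - e))) by (field; lra).
    lra. }
  rewrite <- Rpower_pow, <- (exp_ln b) by lra.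
  unfold Rpower; destruct Hexp as [Hlt | Heq].
  - left; apply exp_increasing; exact Hlt.
  - rewrite Heq; lra.
Qed.

Section Scenario.
Context {Omega : Type} (FO : (Omega -> Prop) -> Prop) (Pr : (Omega -> Prop) -> R).
Context (FT : (vec -> Prop) -> Prop) (mu : (vec -> Prop) -> R).
Context (X : nat -> Omega -> vec) (N : nat).
Hypothesis HFO : sigma_algebra FO.
Hypothesis HPr : prob_measure FO Pr.
Hypothesis HFT : sigma_algebra FT.
Hypothesis Hmu : prob_measure FT mu.
Hypothesis Hiid : iid_sample FO Pr FT mu X N.

Definition block_hits (lo L : nat) (S : vec -> Prop) (w : Omega) : Prop :=
  forall j, (j < L)%nat -> S (X (lo + j)%nat w).

(** The same event, written with the whole sample and the set S on the block
    and everything elsewhere, so that the independence axiom applies. *)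
Lemma block_hits_all (lo L : nat) (S : vec -> Prop) : (lo + L <= N)%nat ->
  block_hits lo L S = (fun w => forall k, (k < N)%nat ->
    (if in_block lo L k then S else fun _ => True) (X k w)).
Proof.
  intros HN; apply set_ext; intros w; split.
  - intros Hw k Hk; destruct (in_block lo L k) eqn:Hin; [| exact I].
    apply in_block_spec in Hin.
    replace k with (lo + (k - lo))%nat by lia; apply Hw; lia.
  - intros Hw j Hj.
    assert (Hin : in_block lo L (lo + j) = true) by (apply in_block_spec; lia).
    specialize (Hw (lo + j)%nat ltac:(lia)); rewrite Hin in Hw; exact Hw.
Qed.

Lemma block_hits_law (lo L : nat) (S : vec -> Prop) : FT S -> (lo + L <= N)%nat ->
  FO (block_hits lo L S) /\ Pr (block_hits lo L S) = mu S ^ L.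
Proof.
  intros HS HN; destruct Hiid as [Hlaw Hindep].
  set (A := fun k => if in_block lo L k then S else fun _ : vec => True).
  assert (HA : forall k, FT (A k))
    by (intros k; unfold A; destruct (in_block lo L k); [exact HS | exact (sa_full FT HFT)]).
  rewrite (block_hits_all lo L S HN); split.
  - apply (sa_countable_inter FO HFO (fun k w => (k < N)%nat -> A k (X k w))).
    intros k; apply sa_guard; auto; intros Hk; apply (proj1 (Hlaw k Hk)), HA.
  - change (Pr (fun w => forall k, (k < N)%nat -> A k (X k w)) = mu S ^ L).
    rewrite (Hindep A (fun k _ => HA k)).
    rewrite (rprod_ext N _ (fun k => if in_block lo L k then mu S else 1)).
    + apply rprod_block; exact HN.
    + intros k Hk; rewrite (proj2 (Hlaw k Hk)) by apply HA.
      unfold A; destruct (in_block lo L k); [reflexivity | apply Hmu].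
Qed.

Lemma scenario_bound (lo L : nat) (S : vec -> Prop) (e b : R) :
  FT S -> (lo + L <= N)%nat -> 0 < e < 1 -> 0 < b ->
  ln (/ b) / ln (/ (1 - e)) <= INR L ->
  exists G : Omega -> Prop, FO G /\ 1 - b <= Pr G /\
    forall w, G w -> block_hits lo L S w -> 1 - e <= mu S.
Proof.
  intros HS HN He Hb HL.
  destruct (classic (1 - e <= mu S)) as [Hgood | Hbad].
  - exists (fun _ => True); split; [apply sa_full; auto |]; split; [| auto].
    destruct HPr as [Hfull _]; lra.
  - destruct (block_hits_law lo L S HS HN) as [Hmeas Hprob].
    exists (fun w => ~ block_hits lo L S w); split; [apply sa_compl; auto |]; split.
    + rewrite (mu_compl FO Pr HFO HPr _ Hmeas), Hprob.
      assert (mu S ^ L <= (1 - e) ^ L)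
        by (apply pow_incr; split; [apply (mu_nonneg FT mu Hmu); auto | lra]).
      assert ((1 - e) ^ L <= b) by (apply sample_size_bound; auto).
      lra.
    + intros w Hw Hhits; contradiction.
Qed.

End Scenario.

Lemma accepted_implies_target (n m : nat) (Q : vec -> mat) (c : vec -> vec)
  (H : vec -> mat) (h : vec -> vec) (Ut lamt : vec -> vec) (gp gd : R) (P : vec) :
  primal_ok n m Q c H h Ut gp P -> dual_ok n m Q c H h lamt gd P ->
  target_ok n m Q c H h Ut lamt (gp + gd) P.
Proof.
  intros [Hfeas Hobj] [Hnonneg Hdual].
  unfold target_ok; repeat split; auto; lra.
Qed.

Theorem theorem1
  (* parameter dimension, decision dimension, number of constraints *)
  (q n m : nat)
  (* parameter set, its sigma-algebra and the distribution P *)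
  (Pset : vec -> Prop) (FT : (vec -> Prop) -> Prop) (mu : (vec -> Prop) -> R)
  (* QP data *)
  (Q : vec -> mat) (c : vec -> vec) (H : vec -> mat) (h : vec -> vec)
  (* learned primal and dual policies *)
  (Ut lamt : vec -> vec)
  (* tolerances *)
  (eps beta gam eps_p eps_d beta_p beta_d gam_p gam_d : R)
  (Np Nd : nat)
  (* sample space and samples: X 0..Np-1 primal, X Np..Np+Nd-1 dual *)
  (Omega : Type) (FO : (Omega -> Prop) -> Prop) (Pr : (Omega -> Prop) -> R)
  (X : nat -> Omega -> vec)
  (Hcomp : compact_Rq q Pset)
  (HFT : sigma_algebra FT) (Hmu : prob_measure FT mu)
  (HPsetF : FT Pset) (HPset1 : mu Pset = 1)
  (HQ : forall P, Pset P -> sym_pd n (Q P))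
  (Hfeas : forall P, Pset P -> qp_feasible_finite n m (Q P) (c P) (H P) (h P))
  (Hmeas_p : FT (primal_ok n m Q c H h Ut gam_p))
  (Hmeas_d : FT (dual_ok n m Q c H h lamt gam_d))
  (Hmeas_t : FT (target_ok n m Q c H h Ut lamt gam))
  (Heps : 0 < eps < 1) (Hbeta : 0 < beta < 1) (Hgam : 0 < gam)
  (Heps_p : 0 < eps_p) (Heps_d : 0 < eps_d) (Heps_sum : eps_p + eps_d = eps)
  (Hbeta_p : 0 < beta_p) (Hbeta_d : 0 < beta_d) (Hbeta_sum : beta_p + beta_d = beta)
  (Hgam_p : 0 < gam_p) (Hgam_d : 0 < gam_d) (Hgam_sum : gam_p + gam_d = gam)
  (HNp : ln (/ beta_p) / ln (/ (1 - eps_p)) <= INR Np)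
  (HNd : ln (/ beta_d) / ln (/ (1 - eps_d)) <= INR Nd)
  (HFO : sigma_algebra FO) (HPr : prob_measure FO Pr)
  (Hiid : iid_sample FO Pr FT mu X (Np + Nd)) :
  exists E : Omega -> Prop, FO E /\ 1 - beta <= Pr E /\
    forall w, E w ->
      ((forall i, (i < Np)%nat -> primal_ok n m Q c H h Ut gam_p (X i w)) /\
       (forall j, (j < Nd)%nat -> dual_ok n m Q c H h lamt gam_d (X (Np + j)%nat w))) ->
      1 - eps <= mu (target_ok n m Q c H h Ut lamt gam).
Proof.
  set (Sp := primal_ok n m Q c H h Ut gam_p).
  set (Sd := dual_ok n m Q c H h lamt gam_d).
  destruct (scenario_bound FO Pr FT mu X (Np + Nd) HFO HPr HFT Hmu Hiid 0 Np Sp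
    eps_p beta_p Hmeas_p ltac:(lia) ltac:(lra) Hbeta_p HNp) as [Gp [HGp [HPGp Hp]]].
  destruct (scenario_bound FO Pr FT mu X (Np + Nd) HFO HPr HFT Hmu Hiid Np Nd Sd
    eps_d beta_d Hmeas_d ltac:(lia) ltac:(lra) Hbeta_d HNd) as [Gd [HGd [HPGd Hd]]].
  exists (fun w => Gp w /\ Gd w); split; [apply sa_inter; auto |]; split.
  - assert (Hboth := mu_inter_ge FO Pr HFO HPr Gp Gd HGp HGd); lra.
  - intros w [HwP HwD] [Hprim Hdual].
    assert (Hmp := Hp w HwP Hprim).
    assert (Hmd := Hd w HwD Hdual).
    assert (Hinter := mu_inter_ge FT mu HFT Hmu Sp Sd Hmeas_p Hmeas_d).
    assert (Htarget : mu (fun P => Sp P /\ Sd P) <= mu (target_ok n m Q c H h Ut lamt gam)).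
    { apply (mu_mono FT mu HFT Hmu); [apply sa_inter; auto | exact Hmeas_t |].
      intros P [HPp HPd]; rewrite <- Hgam_sum.
      apply accepted_implies_target; assumption. }
    lra.
Qed.
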